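(* Let $M,N\geq 2$ and let $\rho=\sum_{k=1}^n p_k|a^k\rangle\langle a^k|\otimes|b^k\rangle\langle b^k|$ be a classically correlated state on $\mathbb{C}^M\otimes\mathbb{C}^N$ (with $n>1$, $p_k\geq0$, $\sum_kp_k=1$, and unit vectors $|a^k\rangle\in\mathbb{C}^M$, $|b^k\rangle\in\mathbb{C}^N$). Then $$d_{\max}(\rho)\leq\sqrt{\frac{2(M-1)(N-1)}{MN}}.$$
   Context: For a state $\rho$ on $\mathbb{C}^M\otimes\mathbb{C}^N$ let $\rho_B=\mathrm{Tr}_A(\rho)$. A unitary $U^B$ on $\mathbb{C}^N$ is called cyclic for $\rho$ if $[\rho_B,U^B]=0$. Set $\rho_f=(I\otimes U^B)\rho(I\otimes U^{B\dagger})$ and define the Fu distance $d(\rho,U^B)=\frac{1}{\sqrt2}\|\rho-\rho_f\|_F$ (Frobenius norm $\|X\|_F=\sqrt{\mathrm{Tr}(X^\dagger X)}$). Define $d_{\max}(\rho)=\max\{d(\rho,U^B): U^B\text{ unitary},\ [\rho_B,U^B]=0\}$. *)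

From HB Require Import structures.
From mathcomp Require Import all_boot all_order all_algebra.
From mathcomp Require Export complex mxtens.
Set Implicit Arguments. Unset Strict Implicit. Unset Printing Implicit Defensive.
Import Order.TTheory GRing.Theory Num.Theory.
Local Open Scope ring_scope.

Definition adjmx (C : numClosedFieldType) (m n : nat) (A : 'M[C]_(m, n)) : 'M[C]_(n, m) :=
  (map_mx Num.conj A)^T.

Definition frob (C : numClosedFieldType) (n : nat) (X : 'M[C]_n) : C :=
  sqrtC (\tr (adjmx X *m X)).

(* partial trace over the first factor C^M of C^M (x) C^N;
   indices follow mxtens: (i,j) |-> mxtens_index (i,j) *)
Definition ptrA (C : numClosedFieldType) (M N : nat) (rho : 'M[C]_(M * N)) : 'M[C]_N :=
  \matrix_(j, l) \sum_(i < M) rho (mxtens_index (i, j)) (mxtens_index (i, l)).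

Definition unitary (C : numClosedFieldType) (n : nat) (U : 'M[C]_n) : Prop :=
  adjmx U *m U = 1%:M /\ U *m adjmx U = 1%:M.

Definition rho_f (C : numClosedFieldType) (M N : nat) (rho : 'M[C]_(M * N)) (U : 'M[C]_N)
  : 'M[C]_(M * N) :=
  ((1%:M : 'M[C]_M) *t U) *m rho *m ((1%:M : 'M[C]_M) *t adjmx U).

Definition fu_dist (C : numClosedFieldType) (M N : nat) (rho : 'M[C]_(M * N)) (U : 'M[C]_N) : C :=
  frob (rho - rho_f rho U) / sqrtC 2.

Definition cyclic_for (C : numClosedFieldType) (M N : nat) (rho : 'M[C]_(M * N)) (U : 'M[C]_N)
  : Prop := unitary U /\ ptrA rho *m U = U *m ptrA rho.

Definition proj (C : numClosedFieldType) (n : nat) (v : 'cV[C]_n) : 'M[C]_n := v *m adjmx v.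

Definition unit_vec (C : numClosedFieldType) (n : nat) (v : 'cV[C]_n) : Prop :=
  adjmx v *m v = 1%:M.

Definition cc_state (C : numClosedFieldType) (M N n : nat) (p : 'I_n -> C)
  (a : 'I_n -> 'cV[C]_M) (b : 'I_n -> 'cV[C]_N) : 'M[C]_(M * N) :=
  \sum_(k < n) p k *: (proj (a k) *t proj (b k)).

(* Write rho' = rho_f.  Conjugating by I (x) U replaces each b^k by U b^k, so
   rho' is again classically correlated with the same a^k, and
   ||rho - rho'||^2 = sum_{k,l} p_k p_l |<a^k,a^l>|^2
                        (|<b^k,b^l>|^2 + |<Ub^k,Ub^l>|^2 - |<b^k,Ub^l>|^2 - |<Ub^k,b^l>|^2).
   Bounding the first two overlaps and |<a^k,a^l>|^2 by 1 gives
   ||rho - rho'||^2 <= 2 - 2 Tr(rho_B U rho_B U^dagger), and cyclicity of U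
   turns this into 2 - 2 Tr(rho_B^2) <= 2 - 2/N.  Finally 1 - 1/N is below the
   claimed bound as soon as M >= 2. *)
From HB Require Import structures.
From mathcomp Require Import all_boot all_order all_algebra.
From mathcomp Require Import complex mxtens.
From mathcomp Require Import ring.
Set Implicit Arguments. Unset Strict Implicit. Unset Printing Implicit Defensive.
Import Order.TTheory GRing.Theory Num.Theory.
Local Open Scope ring_scope.

Section Adjoint.
Variable C : numClosedFieldType.

Lemma adjmxE m n (A : 'M[C]_(m, n)) i j : adjmx A i j = (A j i)^*.
Proof. by rewrite /adjmx !mxE. Qed.

Lemma adjmxM m n p (A : 'M[C]_(m, n)) (B : 'M[C]_(n, p)) :
  adjmx (A *m B) = adjmx B *m adjmx A.
Proof. by rewrite /adjmx map_mxM trmx_mul. Qed.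

Lemma adjmxK m n (A : 'M[C]_(m, n)) : adjmx (adjmx A) = A.
Proof. by apply/matrixP=> i j; rewrite !adjmxE conjCK. Qed.

Lemma adjmxB m n (A B : 'M[C]_(m, n)) : adjmx (A - B) = adjmx A - adjmx B.
Proof. by apply/matrixP=> i j; rewrite /adjmx !mxE rmorphB. Qed.

Lemma adjmxZ m n a (A : 'M[C]_(m, n)) : adjmx (a *: A) = a^* *: adjmx A.
Proof. by apply/matrixP=> i j; rewrite /adjmx !mxE rmorphM. Qed.

Lemma adjmx_sum m n k (F : 'I_k -> 'M[C]_(m, n)) :
  adjmx (\sum_i F i) = \sum_i adjmx (F i).
Proof.
apply/matrixP=> i j; rewrite adjmxE !summxE rmorph_sum.
by apply: eq_bigr => l _; rewrite adjmxE.
Qed.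

Lemma adjmx_tens m n p q (A : 'M[C]_(m, n)) (B : 'M[C]_(p, q)) :
  adjmx (A *t B) = adjmx A *t adjmx B.
Proof. by apply/matrixP=> i j; rewrite !mxE /= rmorphM. Qed.

Lemma adjmx_proj n (v : 'cV[C]_n) : adjmx (proj v) = proj v.
Proof. by rewrite /proj adjmxM adjmxK. Qed.

Lemma proj_mul n (U : 'M[C]_n) (v : 'cV[C]_n) :
  proj (U *m v) = U *m proj v *m adjmx U.
Proof. by rewrite /proj adjmxM !mulmxA. Qed.

Lemma unit_vec_unitary n (U : 'M[C]_n) (v : 'cV[C]_n) :
  unitary U -> unit_vec v -> unit_vec (U *m v).
Proof.
by case=> UU _ v1; rewrite /unit_vec adjmxM mulmxA -(mulmxA _ (adjmx U)) UU mulmx1.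
Qed.

End Adjoint.

Section InnerProduct.
Variable C : numClosedFieldType.

Definition dot n (u v : 'cV[C]_n) : C := (adjmx u *m v) 0 0.

Lemma dotE n (u v : 'cV[C]_n) : dot u v = \sum_i (u i 0)^* * v i 0.
Proof. by rewrite /dot mxE; apply: eq_bigr => i _; rewrite adjmxE. Qed.

Lemma conj_dot n (u v : 'cV[C]_n) : (dot u v)^* = dot v u.
Proof.
by rewrite !dotE rmorph_sum; apply: eq_bigr => i _; rewrite rmorphM /= conjCK mulrC.
Qed.

Lemma dot_ge0 n (u : 'cV[C]_n) : 0 <= dot u u.
Proof. by rewrite dotE; apply: sumr_ge0 => i _; rewrite mulrC mul_conjC_ge0. Qed.

Lemma dotBl n (u v w : 'cV[C]_n) : dot (u - v) w = dot u w - dot v w.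
Proof. by rewrite !dotE -sumrB; apply: eq_bigr => i _; rewrite !mxE rmorphB mulrBl. Qed.

Lemma dotBr n (u v w : 'cV[C]_n) : dot w (u - v) = dot w u - dot w v.
Proof. by rewrite !dotE -sumrB; apply: eq_bigr => i _; rewrite !mxE mulrBr. Qed.

Lemma dotZl n a (u w : 'cV[C]_n) : dot (a *: u) w = a^* * dot u w.
Proof. by rewrite !dotE mulr_sumr; apply: eq_bigr => i _; rewrite !mxE rmorphM mulrA. Qed.

Lemma dotZr n a (u w : 'cV[C]_n) : dot w (a *: u) = a * dot w u.
Proof. by rewrite !dotE mulr_sumr; apply: eq_bigr => i _; rewrite !mxE mulrCA. Qed.

Lemma unit_vec_dot n (v : 'cV[C]_n) : unit_vec v -> dot v v = 1.
Proof. by rewrite /unit_vec /dot => ->; rewrite mxE. Qed.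

(* Cauchy-Schwarz, from 0 <= <v - s w, v - s w> with s = <w, v>. *)
Lemma normC_dot_unit_le1 n (v w : 'cV[C]_n) : unit_vec v -> unit_vec w ->
  `|dot v w| ^+ 2 <= 1.
Proof.
move=> /unit_vec_dot vv /unit_vec_dot ww.
set s := dot w v; have vw : dot v w = s^* by rewrite /s conj_dot.
have := dot_ge0 (v - s *: w).
rewrite !dotBl !dotBr !dotZl !dotZr vv ww vw -/s norm_conjC normCK.
have -> : 1 - s * s^* - (s^* * s - s^* * (s * 1)) = 1 - s * s^* by ring.
by rewrite subr_ge0.
Qed.

Lemma mxtrace_proj n (v : 'cV[C]_n) : \tr (proj v) = dot v v.
Proof. by rewrite /proj mxtrace_mulC /dot /mxtrace big_ord1. Qed.

Lemma mxtrace_projM n (v w : 'cV[C]_n) : \tr (proj v *m proj w) = `|dot v w| ^+ 2.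
Proof.
rewrite /proj mulmxA mxtrace_mulC !mulmxA /mxtrace big_ord1 -mulmxA mxE big_ord1.
by rewrite normCK conj_dot mulrC.
Qed.

End InnerProduct.

Section TensorTrace.
Variable C : numClosedFieldType.

Lemma sum_mxtens_index m n (F : 'I_(m * n) -> C) :
  \sum_(k < m * n) F k = \sum_(i < m) \sum_(j < n) F (mxtens_index (i, j)).
Proof.
rewrite (reindex (@mxtens_index m n)) /=; last first.
  by exists (@mxtens_unindex m n) => x _; [apply: mxtens_indexK | apply: mxtens_unindexK].
by rewrite pair_bigA /=; apply: eq_bigr => -[i j].
Qed.

Lemma mxtrace_tens m n (A : 'M[C]_m) (B : 'M[C]_n) : \tr (A *t B) = \tr A * \tr B.
Proof.
rewrite /mxtrace sum_mxtens_index mulr_suml; apply: eq_bigr => i _.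
by rewrite mulr_sumr; apply: eq_bigr => j _; apply: tensmxE.
Qed.

Lemma ptrA_tens m n (A : 'M[C]_m) (B : 'M[C]_n) : ptrA (A *t B) = \tr A *: B.
Proof.
apply/matrixP=> j l; rewrite !mxE /mxtrace mulr_suml; apply: eq_bigr => i _.
exact: tensmxE.
Qed.

Lemma ptrA_sumZ m n k (p : 'I_k -> C) (X : 'I_k -> 'M[C]_(m * n)) :
  ptrA (\sum_i p i *: X i) = \sum_i p i *: ptrA (X i).
Proof.
apply/matrixP=> j l; rewrite !mxE summxE.
under eq_bigr do rewrite summxE.
rewrite exchange_big; apply: eq_bigr => i _.
by rewrite [RHS]mxE [X in _ * X]mxE mulr_sumr; apply: eq_bigr => r _; rewrite mxE.
Qed.

Lemma mxtrace_sumZM n k (p : 'I_k -> C) (E F : 'I_k -> 'M[C]_n) :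
  \tr ((\sum_i p i *: E i) *m (\sum_j p j *: F j)) =
  \sum_i \sum_j p i * p j * \tr (E i *m F j).
Proof.
rewrite mulmx_suml raddf_sum; apply: eq_bigr => i _.
rewrite mulmx_sumr raddf_sum; apply: eq_bigr => j _.
by rewrite -scalemxAl -scalemxAr scalerA; apply: mxtraceZ.
Qed.

End TensorTrace.

Section Purity.
Variable C : numClosedFieldType.

Lemma mxtrace_adjM_ge0 n (X : 'M[C]_n) : 0 <= \tr (adjmx X *m X).
Proof.
rewrite /mxtrace; apply: sumr_ge0 => i _; rewrite mxE.
by apply: sumr_ge0 => j _; rewrite adjmxE mulrC mul_conjC_ge0.
Qed.

(* With w i = |S i i|: sum_i (w i - 1/n)^2 >= 0 and sum_i w i >= |tr S| = 1. *)
Lemma mxtrace_sqr_ge_inv_dim n (S : 'M[C]_n) : (0 < n)%N ->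
  adjmx S = S -> \tr S = 1 -> n%:R^-1 <= \tr (S *m S).
Proof.
move=> n0 SH trS.
have -> : \tr (S *m S) = \sum_i \sum_j `|S i j| ^+ 2.
  rewrite /mxtrace; apply: eq_bigr => i _; rewrite mxE; apply: eq_bigr => j _.
  by rewrite normCK -(adjmxE S j i) SH.
apply: (@le_trans _ _ (\sum_i `|S i i| ^+ 2)); last first.
  apply: ler_sum => i _; rewrite (bigD1 i) //= lerDl.
  by apply: sumr_ge0 => j _; rewrite exprn_ge0.
pose w i : C := `|S i i|; set c : C := n%:R^-1.
have w1 : 1 <= \sum_i w i by rewrite -(normr1 C) -trS; apply: ler_norm_sum.
have nc : n%:R * c = 1 by rewrite /c mulfV // pnatr_eq0 -lt0n.
have c0 : 0 <= c by rewrite invr_ge0 ler0n.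
have sq0 : 0 <= \sum_i (w i - c) ^+ 2.
  apply: sumr_ge0 => i _; apply: real_exprn_even_ge0 => //.
  by rewrite realB // ?normr_real // /c realV realn.
have expand : \sum_i (w i - c) ^+ 2 = \sum_i w i ^+ 2 - (c *+ 2) * \sum_i w i + c.
  rewrite (eq_bigr (fun i => w i ^+ 2 - (c *+ 2) * w i + c ^+ 2)); last by move=> i _; ring.
  rewrite big_split /= sumrB -mulr_sumr sumr_const card_ord -mulr_natl.
  by rewrite -[c ^+ 2 *+ n]mulr_natl expr2 mulrA nc mul1r.
rewrite {}expand in sq0.
change (c <= \sum_i w i ^+ 2).
have cw : c *+ 2 <= c *+ 2 * \sum_i w i.
  by rewrite -{1}[c *+ 2]mulr1 ler_wpM2l // mulrn_wge0.
rewrite -subr_ge0.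
have -> : \sum_i w i ^+ 2 - c = (\sum_i w i ^+ 2 - (c *+ 2) * \sum_i w i + c)
                              + ((c *+ 2) * \sum_i w i - c *+ 2) by ring.
by apply: addr_ge0; rewrite // subr_ge0.
Qed.

End Purity.

Lemma overlap_combination_le (R : numDomainType) (c y y' x x' : R) :
  0 <= c <= 1 -> y <= 1 -> y' <= 1 -> x <= 1 -> x' <= 1 ->
  c * (y + y' - x - x') <= 2 - x - x'.
Proof.
move=> /andP[c0 c1] y1 y'1 x1 x'1; rewrite -subr_ge0.
have -> : 2 - x - x' - c * (y + y' - x - x') =
  (1 - c) * ((1 - x) + (1 - x')) + c * ((1 - y) + (1 - y')) by ring.
by apply: addr_ge0; apply: mulr_ge0; rewrite ?subr_ge0 // addr_ge0 // subr_ge0.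
Qed.

Section ClassicallyCorrelated.
Variables (C : numClosedFieldType) (m n k : nat).
Variables (p : 'I_k -> C) (a : 'I_k -> 'cV[C]_m).
Hypothesis p_ge0 : forall i, 0 <= p i.

Definition mixture (b : 'I_k -> 'cV[C]_n) : 'M[C]_n := \sum_i p i *: proj (b i).

Lemma rho_f_cc_state (b : 'I_k -> 'cV[C]_n) (U : 'M[C]_n) :
  rho_f (cc_state p a b) U = cc_state p a (fun i => U *m b i).
Proof.
rewrite /rho_f /cc_state mulmx_sumr mulmx_suml; apply: eq_bigr => i _.
by rewrite -scalemxAr -scalemxAl !tensmx_mul mul1mx mulmx1 proj_mul.
Qed.

Lemma ptrA_cc_state (b : 'I_k -> 'cV[C]_n) :
  (forall i, unit_vec (a i)) -> ptrA (cc_state p a b) = mixture b.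
Proof.
move=> a1; rewrite ptrA_sumZ; apply: eq_bigr => i _.
by rewrite ptrA_tens mxtrace_proj unit_vec_dot // scale1r.
Qed.

Lemma mixture_mul (b : 'I_k -> 'cV[C]_n) (U : 'M[C]_n) :
  mixture (fun i => U *m b i) = U *m mixture b *m adjmx U.
Proof.
rewrite /mixture mulmx_sumr mulmx_suml; apply: eq_bigr => i _.
by rewrite -scalemxAr -scalemxAl proj_mul.
Qed.

Lemma adjmx_mixture (b : 'I_k -> 'cV[C]_n) : adjmx (mixture b) = mixture b.
Proof.
by rewrite adjmx_sum; apply: eq_bigr => i _; rewrite adjmxZ adjmx_proj geC0_conj.
Qed.

Lemma mxtrace_mixture (b : 'I_k -> 'cV[C]_n) : \sum_i p i = 1 ->
  (forall i, unit_vec (b i)) -> \tr (mixture b) = 1.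
Proof.
move=> p1 b1; rewrite /mixture raddf_sum -p1; apply: eq_bigr => i _.
by rewrite [LHS]mxtraceZ mxtrace_proj unit_vec_dot // mulr1.
Qed.

Lemma mxtrace_mixtureM (b b' : 'I_k -> 'cV[C]_n) :
  \tr (mixture b *m mixture b') = \sum_i \sum_j p i * p j * `|dot (b i) (b' j)| ^+ 2.
Proof.
by rewrite mxtrace_sumZM; apply: eq_bigr => i _; apply: eq_bigr => j _; rewrite mxtrace_projM.
Qed.

Lemma adjmx_cc_state (b : 'I_k -> 'cV[C]_n) : adjmx (cc_state p a b) = cc_state p a b.
Proof.
rewrite adjmx_sum; apply: eq_bigr => i _.
by rewrite adjmxZ adjmx_tens !adjmx_proj geC0_conj.
Qed.

Lemma mxtrace_cc_state_diff_sqr (b b' : 'I_k -> 'cV[C]_n) :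
  \tr ((cc_state p a b - cc_state p a b') *m (cc_state p a b - cc_state p a b')) =
  \sum_i \sum_j p i * p j * (`|dot (a i) (a j)| ^+ 2 *
     (`|dot (b i) (b j)| ^+ 2 + `|dot (b' i) (b' j)| ^+ 2
      - `|dot (b i) (b' j)| ^+ 2 - `|dot (b' i) (b j)| ^+ 2)).
Proof.
rewrite /cc_state mulmxBl !mulmxBr !raddfB /= opprK !mxtrace_sumZM.
rewrite -!sumrN -!big_split /=; apply: eq_bigr => i _.
rewrite -!sumrN -!big_split /=; apply: eq_bigr => j _.
by rewrite !tensmx_mul !mxtrace_tens !mxtrace_projM; ring.
Qed.

Lemma mxtrace_cc_state_diff_sqr_le (b b' : 'I_k -> 'cV[C]_n) : \sum_i p i = 1 ->
  (forall i, unit_vec (a i)) -> (forall i, unit_vec (b i)) -> (forall i, unit_vec (b' i)) ->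
  \tr ((cc_state p a b - cc_state p a b') *m (cc_state p a b - cc_state p a b')) <=
    2 - 2 * \tr (mixture b *m mixture b').
Proof.
move=> p1 a1 b1 b'1; rewrite mxtrace_cc_state_diff_sqr.
have -> : 2 - 2 * \tr (mixture b *m mixture b') =
    2 - \tr (mixture b *m mixture b') - \tr (mixture b' *m mixture b).
  by rewrite [\tr (mixture b' *m _)]mxtrace_mulC; ring.
have two : 2 = \sum_i \sum_j p i * p j * 2.
  transitivity ((\sum_i p i) * (\sum_j p j) * 2); first by rewrite p1 !mul1r.
  rewrite !mulr_suml; apply: eq_bigr => i _.
  by rewrite mulr_sumr mulr_suml.
rewrite two !mxtrace_mixtureM -!sumrB; apply: ler_sum => i _.
rewrite -!sumrB; apply: ler_sum => j _; rewrite -!mulrBr ler_wpM2l ?mulr_ge0 //.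
by apply: overlap_combination_le; rewrite ?normC_dot_unit_le1 ?exprn_ge0.
Qed.

End ClassicallyCorrelated.

Lemma sqrtC_div_sqrt2_le (C : numClosedFieldType) (t B : C) :
  0 <= t -> t <= 2 * B -> sqrtC t / sqrtC 2 <= sqrtC B.
Proof.
move=> t0 tB; have B0 : 0 <= B by rewrite -(pmulr_rge0 _ (ltr0n C 2)) (le_trans t0).
rewrite ler_pdivrMr ?sqrtC_gt0 ?ltr0n // -sqrtCM ?nnegrE ?ler0n //.
by rewrite ler_sqrtC ?nnegrE ?mulr_ge0 ?ler0n // mulrC.
Qed.

Lemma one_sub_inv_le_bound (C : numClosedFieldType) (M N : nat) :
  (2 <= M)%N -> (2 <= N)%N ->
  1 - N%:R^-1 <= (2 * (M - 1)%:R * (N - 1)%:R) / (M%:R * N%:R) :> C.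
Proof.
move=> leM leN; rewrite !natrB ?(leq_trans _ leM) ?(leq_trans _ leN) //.
have M0 : M%:R != 0 :> C by rewrite pnatr_eq0 -lt0n (leq_trans _ leM).
have N0 : N%:R != 0 :> C by rewrite pnatr_eq0 -lt0n (leq_trans _ leN).
rewrite -subr_ge0.
have -> : 2 * (M%:R - 1) * (N%:R - 1) / (M%:R * N%:R) - (1 - N%:R^-1) =
          (M%:R - 2) * (N%:R - 1) / (M%:R * N%:R) :> C by field; rewrite M0 N0.
rewrite divr_ge0 ?mulr_ge0 ?ler0n // subr_ge0 ?ler_nat //.
by rewrite ler1n (leq_trans _ leN).
Qed.

Theorem mainTheorem8 (R : rcfType) (M N n : nat)
  (p : 'I_n -> R[i]) (a : 'I_n -> 'cV[R[i]]_M) (b : 'I_n -> 'cV[R[i]]_N) :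
  (2 <= M)%N -> (2 <= N)%N -> (1 < n)%N ->
  (forall k, 0 <= p k) -> \sum_(k < n) p k = 1 ->
  (forall k, unit_vec (a k)) -> (forall k, unit_vec (b k)) ->
  forall U : 'M[R[i]]_N, cyclic_for (cc_state p a b) U ->
  fu_dist (cc_state p a b) U <=
    sqrtC ((2 * (M - 1)%:R * (N - 1)%:R) / (M%:R * N%:R)).
Proof.
move=> leM leN _ p_ge0 p1 a1 b1 U [UU commU].
have Ub1 k : unit_vec (U *m b k) := unit_vec_unitary UU (b1 k).
have mixture_U : mixture p (fun k => U *m b k) = mixture p b.
  by rewrite mixture_mul -(ptrA_cc_state p b a1) -commU -mulmxA UU.2 mulmx1.
rewrite /fu_dist /frob rho_f_cc_state.
apply: sqrtC_div_sqrt2_le; first exact: mxtrace_adjM_ge0.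
rewrite adjmxB !adjmx_cc_state //.
apply: le_trans (mxtrace_cc_state_diff_sqr_le p_ge0 p1 a1 b1 Ub1) _.
rewrite mixture_U -{1}[2]mulr1 -mulrBr ler_wpM2l ?ler0n //.
apply: le_trans (one_sub_inv_le_bound _ leM leN); rewrite lerB // mxtrace_sqr_ge_inv_dim ?(leq_trans _ leN) ?adjmx_mixture //.
exact: mxtrace_mixture.
Qed.
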